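(* Let $S$ be an atomic base, $\Gamma=x_1:A_1,\dots,x_n:A_n$ a context and $t$ a proof-term with $tFV(t)\subseteq\{x_1,\dots,x_n\}$. Then the term $t$ of $A$ from $\Gamma$ is valid in the E-phase model if and only if it is E-valid, i.e. if and only if $t[x_1:=t_1,\dots,x_n:=t_n]\in A^*$ for all closed terms $t_i\in A_i^*$ ($1\le i\le n$) exactly when $t$ is qE-valid.
   Context: System $\mathbf{IL}_{\mathbf{at}}$: formulas $A ::= X\mid A\to B\mid\forall X.A$ ($X$ atoms); terms $t ::= x\mid c^A\mid \lambda x.t\mid ts\mid\Lambda X.t\mid tX$ (with a term-constant $c^A$ for every formula $A$; $tX$ only for atoms $X$); typing judgments $\Gamma\vdash t:A$ derived by the rules: $\Gamma,x:A\vdash x:A$; $\Gamma\vdash c^A:A$; $\lambda$-abstraction ($\to$i); application ($\to$e); $\Lambda X.t:\forall X.A$ from $t:A$ when $X$ is not free in the formulas of $\Gamma$ ($\forall$i); $tY:A[X:=Y]$ from $t:\forall X.A$ for an atom $Y$ ($\forall$e). $tFV(t)$: free term-variables; closed = no free term-variables. $\beta$-reduction $(\lambda x.t)s\to_\beta t[x:=s]$, $(\Lambda X.t)Y\to_\beta t[X:=Y]$ in any subterm position; normal = no redex; $\twoheadrightarrow$ its reflexive-transitive closure. For a formula $A$, $[\![A]\!]$ is the set of closed terms $t$ such that $t\twoheadrightarrow s$ for some normal $s$ with $\vdash s:A$ derivable (empty context). E-phase model: an interpretation $A\mapsto A^*$ of formulas as sets of closed terms, defined by induction: $X^*=[\![X]\!]$;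 $(A\to B)^*=\{t \text{ closed}\mid ts\in B^* \text{ for every } s\in A^*\}$; $(\forall X.A)^*=\{t\text{ closed}\mid tY\in (A[X:=Y])^*\text{ for every atom } Y\}$. A term $t$ of $A$ from $x_1:A_1,\dots,x_n:A_n$ with $tFV(t)\subseteq\{x_1,\dots,x_n\}$ is valid in the E-phase model iff $t[x_1:=t_1,\dots,x_n:=t_n]\in A^*$ for all $t_i\in A_i^*$. An atomic base $S$ is a set of term-constants $c^X$ for atoms $X$; a proof-term contains no term-constants other than those in $S$. qE-validity: a closed $t$ of atom $X$ is qE-valid iff $t\in[\![X]\!]$; a closed $t$ of $B\to C$ is qE-valid iff $ts$ of $C$ is qE-valid for every qE-valid closed $s$ of $B$; a closed $t$ of $\forall X.A$ is qE-valid iff $tY$ of $A[X:=Y]$ is qE-valid for every atom $Y$; $t$ of $A$ from $x_1:A_1,\dots,x_n:A_n$ is qE-valid iff $t[\vec{t_i}]$ is qE-valid for all qE-valid closed $t_i$ of $A_i$. E-valid = proof-term and qE-valid. *)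

(* System IL_at in locally nameless representation:
   free atoms / term variables are names (nat), bound ones are de Bruijn
   indices.  Binders of the named presentation (lambda x, Lambda X, forall X)
   are rendered by indices; named rules with side conditions are rendered
   with an explicit fresh name. *)
From Stdlib Require Import List Arith.
Import ListNotations.

Inductive atom : Type := AF (X : nat) | AB (i : nat) .

Inductive form : Type :=
| At (a : atom)
| Imp (A B : form)
| All (A : form).  (* forall X. A, the body uses AB 0 for X *)

Inductive term : Type :=
| FV (x : nat)
| BV (i : nat)
| Cst (A : form)
| Lam (t : term)
| App (t s : term)
| TLam (t : term)
| TApp (t : term) (a : atom).

Fixpoint fsize (A : form) : nat :=
  match A with
  | At _ => 1
  | Imp B C => S (fsize B + fsize C)
  | All B => S (fsize B)
  end.

Definition atom_wf (d : nat) (a : atom) : Prop :=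
  match a with AF _ => True | AB i => i < d end.

Fixpoint form_wf (d : nat) (A : form) : Prop :=
  match A with
  | At a => atom_wf d a
  | Imp B C => form_wf d B /\ form_wf d C
  | All B => form_wf (S d) B
  end.

Fixpoint term_wf (dt da : nat) (t : term) : Prop :=
  match t with
  | FV _ => True
  | BV i => i < dt
  | Cst A => form_wf da A
  | Lam u => term_wf (S dt) da u
  | App u v => term_wf dt da u /\ term_wf dt da v
  | TLam u => term_wf dt (S da) u
  | TApp u a => term_wf dt da u /\ atom_wf da a
  end.

Definition lc_form (A : form) : Prop := form_wf 0 A.
Definition lc_term (t : term) : Prop := term_wf 0 0 t.

Definition fva_atom (a : atom) : list nat :=
  match a with AF X => [X] | AB _ => [] end.

Fixpoint fva_form (A : form) : list nat :=
  match A with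
  | At a => fva_atom a
  | Imp B C => fva_form B ++ fva_form C
  | All B => fva_form B
  end.

Fixpoint fva_term (t : term) : list nat :=
  match t with
  | FV _ | BV _ => []
  | Cst A => fva_form A
  | Lam u | TLam u => fva_term u
  | App u v => fva_term u ++ fva_term v
  | TApp u a => fva_term u ++ fva_atom a
  end.

Fixpoint tFV (t : term) : list nat :=
  match t with
  | FV x => [x]
  | BV _ | Cst _ => []
  | Lam u | TLam u => tFV u
  | App u v => tFV u ++ tFV v
  | TApp u _ => tFV u
  end.

Definition ctx := list (nat * form).

Definition fva_ctx (G : ctx) : list nat := flat_map (fun p => fva_form (snd p)) G.

Definition closed (t : term) : Prop := lc_term t /\ tFV t = [].

Definition open_atom (k Y : nat) (a : atom) : atom :=
  match a with
  | AB i => if Nat.eqb i k then AF Y else AB i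
  | AF X => AF X
  end.

Fixpoint open_form_rec (k Y : nat) (A : form) : form :=
  match A with
  | At a => At (open_atom k Y a)
  | Imp B C => Imp (open_form_rec k Y B) (open_form_rec k Y C)
  | All B => All (open_form_rec (S k) Y B)
  end.

Definition open_form (A : form) (Y : nat) : form := open_form_rec 0 Y A.

Fixpoint open_ta_rec (k Y : nat) (t : term) : term :=
  match t with
  | FV x => FV x
  | BV i => BV i
  | Cst A => Cst (open_form_rec k Y A)
  | Lam u => Lam (open_ta_rec k Y u)
  | App u v => App (open_ta_rec k Y u) (open_ta_rec k Y v)
  | TLam u => TLam (open_ta_rec (S k) Y u)
  | TApp u a => TApp (open_ta_rec k Y u) (open_atom k Y a)
  end.

Definition open_ta (t : term) (Y : nat) : term := open_ta_rec 0 Y t.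

Fixpoint open_tt_rec (k : nat) (s : term) (t : term) : term :=
  match t with
  | FV x => FV x
  | BV i => if Nat.eqb i k then s else BV i
  | Cst A => Cst A
  | Lam u => Lam (open_tt_rec (S k) s u)
  | App u v => App (open_tt_rec k s u) (open_tt_rec k s v)
  | TLam u => TLam (open_tt_rec k s u)
  | TApp u a => TApp (open_tt_rec k s u) a
  end.

Definition open_tt (t s : term) : term := open_tt_rec 0 s t.

Inductive typing : ctx -> term -> form -> Prop :=
| ty_var G x A : In (x, A) G -> typing G (FV x) A
| ty_cst G A : typing G (Cst A) A
| ty_lam G A B t x :
    ~ In x (map fst G) -> ~ In x (tFV t) ->
    typing ((x, A) :: G) (open_tt t (FV x)) B ->
    typing G (Lam t) (Imp A B)
| ty_app G A B t s :
    typing G t (Imp A B) -> typing G s A -> typing G (App t s) B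
| ty_tlam G A t X :
    ~ In X (fva_ctx G) -> ~ In X (fva_term t) -> ~ In X (fva_form A) ->
    typing G (open_ta t X) (open_form A X) ->
    typing G (TLam t) (All A)
| ty_tapp G A t Y :
    typing G t (All A) -> typing G (TApp t (AF Y)) (open_form A Y).

Inductive step : term -> term -> Prop :=
| st_beta t s : step (App (Lam t) s) (open_tt t s)
| st_tbeta t Y : step (TApp (TLam t) (AF Y)) (open_ta t Y)
| st_appl t t' s : step t t' -> step (App t s) (App t' s)
| st_appr t s s' : step s s' -> step (App t s) (App t s')
| st_tapp t t' a : step t t' -> step (TApp t a) (TApp t' a)
| st_lam t t' x :
    ~ In x (tFV t) -> ~ In x (tFV t') ->
    step (open_tt t (FV x)) (open_tt t' (FV x)) -> step (Lam t) (Lam t')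
| st_tlam t t' X :
    ~ In X (fva_term t) -> ~ In X (fva_term t') ->
    step (open_ta t X) (open_ta t' X) -> step (TLam t) (TLam t').

Inductive red : term -> term -> Prop :=
| red_refl t : red t t
| red_step t u v : step t u -> red u v -> red t v.

Fixpoint normal (t : term) : Prop :=
  match t with
  | FV _ | BV _ | Cst _ => True
  | Lam u | TLam u => normal u
  | App u v =>
      match u with Lam _ => False | _ => normal u /\ normal v end
  | TApp u _ =>
      match u with TLam _ => False | _ => normal u end
  end.

Definition den (A : form) (t : term) : Prop :=
  closed t /\ exists s, red t s /\ normal s /\ typing [] s A.

Fixpoint phase_fuel (n : nat) (A : form) (t : term) : Prop :=
  match n with
  | 0 => False
  | S n =>
    match A with
    | At (AF X) => den (At (AF X)) t
    | At (AB _) => False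
    | Imp B C => closed t /\ forall s, phase_fuel n B s -> phase_fuel n C (App t s)
    | All B => closed t /\ forall Y, phase_fuel n (open_form B Y) (TApp t (AF Y))
    end
  end.

Definition star (A : form) (t : term) : Prop := phase_fuel (fsize A) A t.

Fixpoint qE_fuel (n : nat) (A : form) (t : term) : Prop :=
  match n with
  | 0 => False
  | S n =>
    match A with
    | At (AF X) => den (At (AF X)) t
    | At (AB _) => False
    | Imp B C => forall s, closed s -> qE_fuel n B s -> qE_fuel n C (App t s)
    | All B => forall Y, qE_fuel n (open_form B Y) (TApp t (AF Y))
    end
  end.

Definition qE_closed (t : term) (A : form) : Prop :=
  closed t /\ qE_fuel (fsize A) A t.

Fixpoint lookup (x : nat) (sg : list (nat * term)) : option term :=
  match sg with
  | [] => None
  | (y, s) :: sg' => if Nat.eqb x y then Some s else lookup x sg'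
  end.

Fixpoint msubst (sg : list (nat * term)) (t : term) : term :=
  match t with
  | FV x => match lookup x sg with Some s => s | None => FV x end
  | BV i => BV i
  | Cst A => Cst A
  | Lam u => Lam (msubst sg u)
  | App u v => App (msubst sg u) (msubst sg v)
  | TLam u => TLam (msubst sg u)
  | TApp u a => TApp (msubst sg u) a
  end.

Definition inst (G : ctx) (ts : list term) (t : term) : term :=
  msubst (combine (map fst G) ts) t.

Definition phase_valid (G : ctx) (t : term) (A : form) : Prop :=
  forall ts : list term,
    length ts = length G ->
    Forall2 (fun p ti => star (snd p) ti) G ts ->
    star A (inst G ts t).

Definition qE_valid (G : ctx) (t : term) (A : form) : Prop :=
  forall ts : list term,
    length ts = length G ->
    Forall2 (fun p ti => qE_closed ti (snd p)) G ts ->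
    qE_closed (inst G ts t) A.

(* atomic base S: the set of atoms X such that c^X is in S *)
Definition atomic_base := nat -> Prop.

Fixpoint proof_term (S : atomic_base) (t : term) : Prop :=
  match t with
  | FV _ | BV _ => True
  | Cst (At (AF X)) => S X
  | Cst _ => False
  | Lam u | TLam u => proof_term S u
  | App u v => proof_term S u /\ proof_term S v
  | TApp u _ => proof_term S u
  end.

Definition E_valid (S : atomic_base) (G : ctx) (t : term) (A : form) : Prop :=
  proof_term S t /\ qE_valid G t A.

(* Both A^* and qE-validity are defined by the same recursion on A.  They differ
   only in that A^* demands closedness at every level, whereas qE-validity of an
   implication quantifies over closed arguments only.  Since every member of B^*
   is closed and closed terms are stable under application, induction on A shows
   that A^* is exactly the set of closed qE-valid terms of A; the two notions of
   validity of a term in a context then coincide clause by clause, and the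
   proof-term half of E-validity is one of the hypotheses. *)
From Stdlib Require Import List Lia.
Import ListNotations.

Lemma fsize_open_form_rec (A : form) (k Y : nat) :
  fsize (open_form_rec k Y A) = fsize A.
Proof.
  revert k; induction A; intros k; simpl; auto.
Qed.

Lemma fsize_open_form (A : form) (Y : nat) : fsize (open_form A Y) = fsize A.
Proof. apply fsize_open_form_rec. Qed.

Lemma closed_App (t s : term) : closed t -> closed s -> closed (App t s).
Proof.
  unfold closed, lc_term; simpl.
  intros [Hwt ->] [Hws ->]; auto.
Qed.

Lemma closed_TApp (t : term) (Y : nat) : closed t -> closed (TApp t (AF Y)).
Proof.
  unfold closed, lc_term; simpl.
  intros [Hwt Hft]; auto.
Qed.

Lemma phase_fuel_closed (n : nat) (A : form) (t : term) :
  phase_fuel n A t -> closed t.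
Proof.
  destruct n as [|n]; simpl; [tauto|].
  destruct A as [[X|i]|B C|B]; unfold den; tauto.
Qed.

Lemma phase_fuel_iff_qE_fuel (n m : nat) (A : form) (t : term) :
  fsize A <= n -> fsize A <= m ->
  (phase_fuel n A t <-> closed t /\ qE_fuel m A t).
Proof.
  revert m A t; induction n as [|n IH]; intros m A t Hn Hm.
  - destruct A; simpl in Hn; lia.
  - destruct m as [|m]; [destruct A; simpl in Hm; lia|].
    destruct A as [[X|i]|B C|B]; simpl in Hn, Hm |- *.
    + unfold den; tauto.
    + tauto.
    + assert (IHB : forall s, phase_fuel n B s <-> closed s /\ qE_fuel m B s)
        by (intros; apply IH; lia).
      assert (IHC : forall s, phase_fuel n C s <-> closed s /\ qE_fuel m C s)
        by (intros; apply IH; lia).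
      split; intros [Ht Happ]; split; auto.
      * intros s Hs HBs.
        apply IHC, Happ, IHB; auto.
      * intros s HBs.
        pose proof (phase_fuel_closed _ _ _ HBs) as Hs.
        apply IHB in HBs as [_ HBs].
        apply IHC; split; [apply closed_App|apply Happ]; auto.
    + assert (IHB : forall Y s,
                 phase_fuel n (open_form B Y) s <->
                 closed s /\ qE_fuel m (open_form B Y) s)
        by (intros; apply IH; rewrite fsize_open_form; lia).
      split; intros [Ht Hinst]; split; auto; intros Y.
      * apply IHB, Hinst.
      * apply IHB; split; [apply closed_TApp|]; auto.
Qed.

Lemma star_iff_qE_closed (A : form) (t : term) : star A t <-> qE_closed t A.
Proof. apply phase_fuel_iff_qE_fuel; lia. Qed.

Lemma phase_valid_iff_qE_valid (G : ctx) (t : term) (A : form) :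
  phase_valid G t A <-> qE_valid G t A.
Proof.
  assert (Hargs : forall ts,
             Forall2 (fun p ti => star (snd p) ti) G ts <->
             Forall2 (fun p ti => qE_closed ti (snd p)) G ts)
    by (intros; split; apply Forall2_impl; intros; apply star_iff_qE_closed; auto).
  unfold phase_valid, qE_valid.
  split; intros Hvalid ts Hlen Hts; apply star_iff_qE_closed, Hvalid, Hargs; auto.
Qed.

Theorem mainTheorem3 (S : atomic_base) (G : ctx) (t : term) (A : form) :
  NoDup (map fst G) ->
  Forall (fun p => lc_form (snd p)) G ->
  lc_form A ->
  lc_term t ->
  (forall x, In x (tFV t) -> In x (map fst G)) ->
  proof_term S t ->
  (phase_valid G t A <-> E_valid S G t A).
Proof.
  intros _ _ _ _ _ Hproof.
  unfold E_valid; rewrite phase_valid_iff_qE_valid; tauto.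
Qed.
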